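(* Let $p$ be a prime and $G$ a finite Abelian $p$-group. Then $\operatorname{rank}K(G\times C_p)-\operatorname{rank}K(G,C_p)=\operatorname{rank}B(G)-1$, where $\operatorname{rank}B(G)$ is the number of subgroups of $G$.
   Context: $B(\Pi)$ is the Burnside ring of a finite group $\Pi$ (for $\Pi$ Abelian, free with basis the subgroups $S\le\Pi$, corresponding to $\Pi/S$); $f_\Pi:B(\Pi)\to R_{\mathbb Q}(\Pi)$, $S\mapsto[\mathbb Q[\Pi/S]]$, and $K(\Pi)=\ker f_\Pi$ (Brauer relations). For $K\le G$ and a homomorphism $\rho:K\to C_p$, the graph is $K\times\rho=\{(k,\rho(k))\}\le G\times C_p$; $B(G,C_p)\subset B(G\times C_p)$ is spanned by all graphs, and $K(G,C_p)=K(G\times C_p)\cap B(G,C_p)$. *)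

From HB Require Import structures.
From mathcomp Require Import all_boot all_order all_algebra all_fingroup all_solvable all_field all_character pgroup.
Set Implicit Arguments. Unset Strict Implicit. Unset Printing Implicit Defensive.
Import GRing.Theory Num.Theory.
Local Open Scope ring_scope.
Local Open Scope group_scope.

Section Burnside.

(* Rational Burnside ring B(P) (x) Q of a finite group P, coordinates  *)
(* indexed by the subgroups of P (basis element S <-> P/S).            *)
(* The map f_P : S |-> [Q[P/S]] is recorded through the character of   *)
(* Q[P/S], i.e. the permutation character 'Ind[P, S] 1 (the character  *)
(* map R_Q(P) -> class functions is injective).                        *)
Variable pT : finGroupType.

Definition sub_idx (P : {group pT}) (i : 'I_#|subgroups P|) : {group pT} :=
  enum_val i.

Definition elt_idx (j : 'I_#|pT|) : pT := enum_val j.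

Definition burnside_mx (P : {group pT}) :
    'M[algC]_(#|subgroups P|, #|pT|) :=
  \matrix_(i, j) ('Ind[P, sub_idx i] (1 : 'CF(sub_idx i))) (elt_idx j).

(* K(P) (x) Q as a row space: the kernel of f_P. *)
Definition brauerK (P : {group pT}) := kermx (burnside_mx P).

Definition rankK (P : {group pT}) : nat := \rank (brauerK P).

End Burnside.

Section Graphs.

Variables (gT cT : finGroupType).

Definition is_graph (G : {group gT}) (C : {group cT})
    (S : {set (gT * cT)}) : bool :=
  [exists K : {group gT}, exists rho : {ffun gT -> cT},
    [&& K \subset G, morphic K rho, rho @: K \subset C &
        S == [set (k, rho k) | k in K]]].

(* Coordinate subspace B(G, C) (x) Q of B(G x C) (x) Q spanned by graphs *)
Definition graph_span (G : {group gT}) (C : {group cT}) :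
    'M[algC]_(#|subgroups (setX G C)|) :=
  diag_mx (\row_i ((is_graph G C (sub_idx i))%:R : algC)).

(* rank K(G, C) = rank (K(G x C) meet B(G, C)) *)
Definition rankKgraph (G : {group gT}) (C : {group cT}) : nat :=
  \rank (brauerK (setX_group G C) :&: graph_span G C)%MS.

End Graphs.

From HB Require Import structures.
From mathcomp Require Import all_boot all_order all_algebra all_fingroup all_solvable all_field all_character pgroup.
From mathcomp Require Import zify.
Set Implicit Arguments. Unset Strict Implicit. Unset Printing Implicit Defensive.
Import GRing.Theory Num.Theory.

(* Let P = G x C. As P is abelian, f_P maps P/S to |P : S| times the indicator
   function of S. A subgroup of P is a graph iff it meets 1 x C trivially; as
   |C| is prime, the other subgroups are exactly the H x C with H <= G. The
   indicator w of (1 x C) minus the identity is orthogonal to the indicator of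
   every graph, but not to that of 1 x C. Since G is a p-group, every cyclic
   subgroup of P is a graph or 1 x C, and the indicators of cyclic subgroups
   span those of all subgroups, so the image of f_P is spanned by the images
   of the graphs and of 1 x C. Hence K(P) + B(G, C) is the kernel of the
   linear form u |-> <f_P(u), w>, a hyperplane of B(P), and
   rank K(P) - rank K(G, C) = (rank B(P) - 1) - rank B(G, C) = rank B(G) - 1. *)

Section GraphSubgroups.
Local Open Scope group_scope.
Variables (gT cT : finGroupType) (G : {group gT}) (C : {group cT}).

Lemma expg_pair (a : gT) (b : cT) k : (a, b) ^+ k = (a ^+ k, b ^+ k).
Proof. by elim: k => [|k IHk]; rewrite ?expg0 // !expgS IHk. Qed.

Lemma abelian_setX : abelian G -> abelian C -> abelian (setX G C).
Proof.
move=> abG abC; apply/centsP => -[a b] /[!inE] /andP[aG bC] [a' b'] /[!inE].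
case/andP=> a'G b'C; congr (_, _); [exact: (centsP abG) | exact: (centsP abC)].
Qed.

Lemma is_graph_trivial_fiber (S : {set gT * cT}) c :
  is_graph G C S -> (1, c) \in S -> c = 1.
Proof.
case/existsP=> K /existsP[rho /and4P[_ /morphicP rhoM _ /eqP ->]].
case/imsetP=> k _ [k1 ->]; rewrite -k1.
have := rhoM 1 1 (group1 K) (group1 K); rewrite mulg1.
by move/(congr1 (fun t => t * (rho 1)^-1)); rewrite mulgV -mulgA mulgV mulg1.
Qed.

Lemma trivial_fiber_is_graph (S : {group gT * cT}) :
  S \subset setX G C -> (forall c, (1, c) \in S -> c = 1) -> is_graph G C S.
Proof.
move=> sSGC fiber1.
have fiber_uniq k c1 c2 : (k, c1) \in S -> (k, c2) \in S -> c1 = c2.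
  move=> Sc1 Sc2; have := groupM (groupVr Sc1) Sc2.
  have -> : (k, c1)^-1 * (k, c2) = (1, c1^-1 * c2) by congr (_, _); apply: mulVg.
  by move/fiber1/(congr1 (fun t => c1 * t)); rewrite mulKVg mulg1.
pose rho := [ffun k => odflt 1 [pick c | (k, c) \in S]].
have rhoE k c : (k, c) \in S -> rho k = c.
  move=> Skc; rewrite ffunE; case: pickP => [c' /= Skc'|/(_ c) /=].
    exact: fiber_uniq Skc' Skc.
  by rewrite Skc.
have S_rho k : k \in fst @* S -> (k, rho k) \in S.
  by case/morphimP=> -[k' c] _ Skc ->; rewrite /= (rhoE _ _ Skc).
have inGC k : k \in fst @* S -> (k \in G) && (rho k \in C).
  by move/S_rho/(subsetP sSGC); rewrite inE.
apply/existsP; exists (fst @* S)%G; apply/existsP; exists rho.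
apply/and4P; split.
- by apply/subsetP=> k /inGC /andP[].
- by apply/morphicP=> x y /S_rho Sx /S_rho Sy; exact/rhoE/(groupM Sx Sy).
- by apply/subsetP=> _ /imsetP[k /inGC /andP[_ ?] ->].
apply/eqP/setP=> -[k c]; apply/idP/imsetP => [Skc|[k' /S_rho Sk' [-> ->]] //].
exists k; last by rewrite (rhoE _ _ Skc).
by apply/morphimP; exists (k, c); rewrite ?inE.
Qed.

Section PrimeOrder.
Hypothesis prC : prime #|C|.

Lemma prime_cycle_id c : c \in C -> c != 1 -> <[c]> = C.
Proof.
move=> cC ntc; apply/eqP; rewrite eqEcard cycle_subG cC -/#[c] /=.
have /primeP[_ dvdC] := prC; have /dvdC/orP[|/eqP-> //] := order_dvdG cC.
by rewrite order_eq1 (negPf ntc).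
Qed.

Lemma not_graphE (S : {group gT * cT}) :
  S \subset setX G C -> (~~ is_graph G C S) = (setX 1 C \subset S).
Proof.
move=> sSGC; apply/idP/idP => [ngS|sCS].
  have [fiber1|] := boolP [forall c, ((1, c) \in S) ==> (c == 1)].
    case/negP: ngS; apply: trivial_fiber_is_graph => // c S1c.
    exact/eqP/(implyP (forallP fiber1 c)).
  rewrite negb_forall => /existsP[c]; rewrite negb_imply => /andP[S1c ntc].
  have /(subsetP sSGC) /[!inE] /andP[_ cC] := S1c.
  apply/subsetP=> -[a c']; rewrite inE /= => /andP[/set1P-> ].
  rewrite -(prime_cycle_id cC ntc) => /cycleP[k ->].
  by rewrite -(expg1n _ k) -expg_pair groupX.
have /trivgPn[c cC ntc] : C != 1 :> {set cT} by rewrite -cardG_gt1 prime_gt1.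
apply/negP => /is_graph_trivial_fiber graphS; case/eqP: ntc; apply: graphS.
by apply: (subsetP sCS); rewrite !inE eqxx.
Qed.

Lemma nongraph_subgroupsE :
  [set S in subgroups (setX G C) | ~~ is_graph G C S]
    = (fun H : {group gT} => setX_group H C) @: subgroups G.
Proof.
apply/setP => S; rewrite inE; apply/andP/imsetP.
  rewrite inE => -[sSGC]; rewrite not_graphE // => sCS.
  have inGC x : x \in S -> (x.1 \in G) && (x.2 \in C).
    by move/(subsetP sSGC); rewrite inE.
  exists (fst @* S)%G.
    by rewrite inE; apply/subsetP=> _ /morphimP[x _ /inGC /andP[? _] ->].
  apply: val_inj; apply/setP => -[h c]; rewrite /= inE /=; apply/idP/andP.
    move=> Shc; split; last by case/andP: (inGC _ Shc).
    by apply/morphimP; exists (h, c); rewrite ?inE.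
  case=> /morphimP[[h' c'] _ Shc' /= ->] cC.
  have /andP[_ c'C] := inGC _ Shc'.
  have := groupM Shc' (subsetP sCS (1, c'^-1 * c) _).
  rewrite inE /= set11 groupM ?groupV //= => /(_ erefl).
  have -> : (h', c') * (1, c'^-1 * c) = (h', c) by congr (_, _); rewrite ?mulg1 ?mulKVg.
  done.
case=> H /[!inE] sHG ->; rewrite setXS //=.
by rewrite not_graphE ?setXS // sub1G.
Qed.

Lemma card_nongraph_subgroups :
  #|[set S in subgroups (setX G C) | ~~ is_graph G C S]| = #|subgroups G|.
Proof.
rewrite nongraph_subgroupsE card_in_imset // => H1 H2 _ _ /(congr1 val) /= eqX.
by apply: val_inj; rewrite /= -(morphim_fstX H1 C) -(morphim_fstX H2 C) eqX.
Qed.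

End PrimeOrder.

Lemma cycle_graph_or_setX1 p (x : gT * cT) :
  prime p -> p.-group G -> #|C| = p -> x \in setX G C ->
  is_graph G C <[x]> \/ <[x]> = setX 1 C.
Proof.
move=> pr_p pG oC GCx; have prC : prime #|C| by rewrite oC.
have [|ngx] := boolP (is_graph G C <[x]>); [by left | right].
have sCx : setX 1 C \subset <[x]> by rewrite -not_graphE ?cycle_subG.
have /trivgPn[c cC ntc] : C != 1 :> {set cT} by rewrite -cardG_gt1 prime_gt1.
have := subsetP sCx (1, c); rewrite !inE eqxx cC => /(_ erefl).
case: x GCx sCx {ngx} => h c' /[!inE] /andP[hG c'C] sCx /cycleP[k].
rewrite expg_pair => -[hk ck].
suff h1 : h = 1.
  by apply/eqP; rewrite eqEsubset sCx andbT cycle_subG !inE h1 eqxx.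
(* h ^+ k = 1 while p does not divide k (as c = c' ^+ k != 1), so the
   p-element h is trivial. *)
apply/eqP; rewrite -order_eq1; apply/eqP/(pnat_1 (mem_p_elt pG hG)).
apply: (@pnat_dvd _ k); first by rewrite order_dvdn -hk.
rewrite p'natE //; apply: contra ntc => p_k.
by rewrite ck -order_dvdn (dvdn_trans (order_dvdG c'C)) ?oC.
Qed.

End GraphSubgroups.

Local Open Scope ring_scope.

Lemma rank_diag_mx (F : fieldType) n (d : 'rV[F]_n) :
  \rank (diag_mx d) = (\sum_i (d ord0 i != 0%R : nat))%N.
Proof.
elim: n d => [|n IHn] d; first by rewrite big_ord0 thinmx0 mxrank0.
rewrite big_ord_recl.
pose d1 : 'rV_(1 + n) := d.
have -> : \rank (diag_mx d) = \rank (diag_mx (row_mx (lsubmx d1) (rsubmx d1))).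
  by rewrite hsubmxK.
rewrite diag_mx_row rank_diag_block_mx IHn.
have lshift0 : lshift n (0 : 'I_1) = ord0 by exact: val_inj.
have rshiftE i : rshift 1 i = lift ord0 i :> 'I_(1 + n) by exact: val_inj.
congr (_ + _)%N; last by apply: eq_bigr => i _; rewrite mxE rshiftE.
have -> : diag_mx (lsubmx d1) = d ord0 ord0 *: 1%:M.
  by apply/matrixP => i j; rewrite !ord1 !mxE lshift0 eqxx !mulr1n mulr1.
have [-> | /eqP nz] := eqP; first by rewrite scale0r mxrank0.
by rewrite mxrank_scale_nz // mxrank1.
Qed.

Lemma row_diag_mx_mul (R : pzRingType) m n (d : 'rV[R]_m) (M : 'M_(m, n)) i :
  row i (diag_mx d *m M) = d 0 i *: row i M.
Proof. by apply/rowP => j; rewrite mul_diag_mx !mxE. Qed.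

Section IndicatorRows.
Variable pT : finGroupType.

Definition ind_row (S : {set pT}) : 'rV[algC]_#|pT| :=
  \row_j (elt_idx j \in S)%:R.

Lemma ind_row_mul_tr (S T : {set pT}) :
  ind_row S *m (ind_row T)^T = #|S :&: T|%:R%:M.
Proof.
apply/matrixP => i j; rewrite !ord1 !mxE eqxx mulr1n.
under eq_bigr => k _ do rewrite !mxE -natrM mulnb -in_setI.
rewrite -natr_sum /elt_idx.
rewrite -(big_enum_val (A := predT) (fun x => (x \in S :&: T : nat))); congr _%:R.
by rewrite -sum1_card [RHS]big_mkcond; apply: eq_bigr => x _; case: (x \in _).
Qed.

Definition gen_row (x : pT) : 'rV[algC]_#|pT| :=
  \row_j (<[elt_idx j]> == <[x]>)%g%:R.

(* Each y in S is counted once for each of the totient #[y] generators z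
   of <[y]>. *)
Lemma sum_gen_weights (S : {group pT}) (y : pT) :
  \sum_(z in S) (totient #[z]%g)%:R^-1 * (<[y]>%g == <[z]>%g)%:R
    = (y \in S)%:R :> algC.
Proof.
pose w : algC := (totient #[y]%g)%:R^-1.
rewrite (eq_bigr (fun z => if <[y]>%g == <[z]>%g then w else 0)); last first.
  by move=> z _; rewrite mulr_natr mulrb; case: eqP => // eyz; rewrite /order -eyz.
rewrite -big_mkcondr sumr_const.
have [Sy | S'y] := boolP (y \in S); last first.
  rewrite (eq_card0 (A := [pred z in S | <[y]>%g == <[z]>%g])) ?mulr0n ?mulr0 //.
  move=> z /=; apply: contraNF S'y => /andP[Sz /eqP eyz].
  by rewrite -cycle_subG eyz cycle_subG.
rewrite (eq_card (B := [set z | generator <[y]>%g z])) -?totient_gen.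
  by rewrite -[w *+ _]mulr_natr mulVf // pnatr_eq0 -lt0n totient_gt0 order_gt0.
move=> z; rewrite -topredE /= !inE /generator.
have [eyz | _] := eqP; rewrite ?andbF // andbT.
by rewrite -cycle_subG -eyz cycle_subG.
Qed.

Lemma ind_row_gen_sum (S : {group pT}) :
  ind_row S = \sum_(z in S) (totient #[z]%g)%:R^-1 *: gen_row z.
Proof.
apply/rowP => j; rewrite !mxE summxE -sum_gen_weights.
by apply: eq_bigr => z _; rewrite !mxE.
Qed.

Section GeneratedByCycles.
Variables (P : {group pT}) (k : nat) (W : 'M[algC]_(k, #|pT|)).
Hypothesis ind_cycle_sub : forall x, x \in P -> (ind_row <[x]>%g <= W)%MS.

(* By induction on #[x]: ind_row <[x]> is a multiple of gen_row x plus a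
   combination of gen_row z for elements z generating proper subgroups. *)
Lemma gen_row_sub x : x \in P -> (gen_row x <= W)%MS.
Proof.
have [n] := ubnP #[x]%g; elim: n x => // n IHn x /[!ltnS] le_x_n Px.
have := ind_row_gen_sum <[x]>%G; rewrite (bigID (fun z => <[z]>%g == <[x]>%g)) /=.
have -> : \sum_(z in <[x]>%g | <[z]>%g == <[x]>%g) (totient #[z]%g)%:R^-1 *: gen_row z
    = \sum_(z in <[x]>%g)
        ((totient #[z]%g)%:R^-1 * (<[x]>%g == <[z]>%g)%:R) *: gen_row x.
  rewrite big_mkcondr /=; apply: eq_bigr => z _; rewrite eq_sym.
  have [ezx | _] := eqP; last by rewrite mulr0 scale0r.
  by rewrite mulr1; congr (_ *: _); apply/rowP => j; rewrite !mxE ezx.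
rewrite -scaler_suml sum_gen_weights cycle_id scale1r => /esym/(canRL (addrK _)) ->.
apply: addmx_sub; first exact: ind_cycle_sub.
rewrite -scaleN1r; apply/scalemx_sub/summx_sub => z /andP[xz nzx].
have ltzx : <[z]>%g \proper <[x]>%g by rewrite properEneq nzx cycle_subG.
apply/scalemx_sub/IHn; first exact: leq_trans (proper_card ltzx) le_x_n.
by apply: subsetP xz; rewrite cycle_subG.
Qed.

Lemma ind_row_sub (S : {group pT}) : S \subset P -> (ind_row S <= W)%MS.
Proof.
move=> sSP; rewrite ind_row_gen_sum; apply: summx_sub => z Sz.
exact/scalemx_sub/gen_row_sub/(subsetP sSP).
Qed.

End GeneratedByCycles.
End IndicatorRows.

Section AbelianBurnside.
Variables (pT : finGroupType) (P : {group pT}).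

Lemma sub_idx_subset (i : 'I_#|subgroups P|) : sub_idx i \subset P.
Proof. by have := enum_valP i; rewrite inE. Qed.

Lemma sub_idx_onto (S : {group pT}) :
  S \subset P -> exists i, sub_idx (P := P) i = S.
Proof.
move=> sSP; have sgS : S \in subgroups P by rewrite inE.
by exists (enum_rank_in sgS S); rewrite /sub_idx enum_rankK_in.
Qed.

Hypothesis abP : abelian P.

Lemma cfInd1_abelian (S : {group pT}) x : S \subset P ->
  ('Ind[P, S] (1 : 'CF(S))) x = (#|P|%:R / #|S|%:R) * (x \in S)%:R.
Proof.
move=> sSP; rewrite cfIndE //.
under eq_bigr => y Py do
  rewrite cfun1E memJ_norm ?(subsetP (sub_abelian_norm abP sSP)) //.
by rewrite sumr_const -[_ *+ #|P|]mulr_natr mulrCA [RHS]mulrC [_ / _]mulrC.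
Qed.

Lemma row_burnside_mx i :
  row i (burnside_mx P) = (#|P|%:R / #|sub_idx i|%:R) *: ind_row (sub_idx i).
Proof. by apply/rowP => j; rewrite !mxE cfInd1_abelian ?sub_idx_subset. Qed.

Lemma card_ratio_neq0 (S : {group pT}) : #|P|%:R / #|S|%:R != 0 :> algC.
Proof. by rewrite mulf_neq0 ?invr_eq0 ?pnatr_eq0 -?lt0n ?cardG_gt0. Qed.

Lemma ind_row_sub_burnside i : (ind_row (sub_idx i) <= row i (burnside_mx P))%MS.
Proof. by rewrite row_burnside_mx eqmx_scale ?card_ratio_neq0. Qed.

End AbelianBurnside.

Section GraphsInBurnsideRing.
Variables (gT cT : finGroupType) (G : {group gT}) (C : {group cT}) (p : nat).
Hypotheses (pr_p : prime p) (pG : (p.-group G)%g) (abG : abelian G) (oC : #|C| = p).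
Local Notation pT := (gT * cT)%type.
Local Notation P := (setX_group G C).
Local Notation A := (burnside_mx P).
Local Notation D := (graph_span G C).

Let prC : prime #|C|. Proof. by rewrite oC. Qed.

Let abP : abelian P.
Proof. exact/abelian_setX/cyclic_abelian/prime_cyclic. Qed.

Definition fiber1_col : 'cV[algC]_#|{: pT}| := (ind_row (setX 1 C)^#)%g^T.

Lemma ind_row_graph_fiber1 (S : {set pT}) :
  is_graph G C S -> ind_row S *m fiber1_col = 0.
Proof.
move=> graphS; rewrite ind_row_mul_tr (_ : _ :&: _ = set0) ?cards0 ?raddf0 //.
apply/setP => -[a c]; rewrite !inE /=; apply/negP => /and3P[Sac nt /andP[/eqP a1 _]].
by move: Sac nt; rewrite a1 => /(is_graph_trivial_fiber graphS) ->; rewrite eqxx.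
Qed.

Lemma ind_setX1_fiber1 :
  ind_row (setX 1 C)%g *m fiber1_col = (#|C| - 1)%:R%:M.
Proof.
rewrite ind_row_mul_tr (setIidPr (subsetDl _ _)); congr _%:R%:M.
have := cardsD1 (1%g : pT) (setX 1 C)%g.
rewrite !inE eqxx group1 cardsX cards1 mul1n => ->.
by rewrite add1n subn1.
Qed.

Lemma graph_span_burnside_fiber1 : D *m A *m fiber1_col = 0.
Proof.
apply/row_matrixP => i; rewrite row_mul row_diag_mx_mul row0 !mxE.
have [graph_i|] := boolP (is_graph G C (sub_idx i)); last by rewrite scale0r mul0mx.
by rewrite scale1r row_burnside_mx // -scalemxAl ind_row_graph_fiber1 ?scaler0.
Qed.

Lemma rank_burnside_fiber1 : \rank (A *m fiber1_col) = 1%N.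
Proof.
have [i iE] : exists i, sub_idx (P := P) i = setX_group 1%G C.
  by apply: sub_idx_onto; rewrite setXS ?sub1G.
apply/eqP; rewrite eqn_leq rank_leq_col lt0n mxrank_eq0; apply/eqP => Acol0.
have := congr1 (row i) Acol0; rewrite row_mul row0 row_burnside_mx // -scalemxAl.
rewrite iE ind_setX1_fiber1; apply/eqP; rewrite scaler_eq0 negb_or card_ratio_neq0.
rewrite -scalemx1 scaler_eq0 negb_or matrix_nonzero1 pnatr_eq0 subn_eq0.
by rewrite -ltnNge prime_gt1.
Qed.

Lemma burnside_sub_graphs_setX1 : (A <= D *m A + ind_row (setX 1 C)%g)%MS.
Proof.
apply/row_subP => i; rewrite row_burnside_mx //.
apply/scalemx_sub/(ind_row_sub (P := P)); last exact: sub_idx_subset.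
move=> x Px.
have [graph_x | ->] := cycle_graph_or_setX1 pr_p pG oC Px; last exact: addsmxSr.
have [j jE] : exists j, sub_idx (P := P) j = cycle_group x.
  by apply: sub_idx_onto; rewrite cycle_subG.
apply: submx_trans (addsmxSl _ _); apply: submx_trans (row_sub j _).
have := ind_row_sub_burnside abP j.
by rewrite row_diag_mx_mul mxE jE graph_x scale1r.
Qed.

Lemma ker_burnside_fiber1 : (kermx (A *m fiber1_col) == kermx A + D)%MS.
Proof.
apply/andP; split; last first.
  rewrite addsmx_sub !sub_kermx mulmxA mulmx_ker mul0mx eqxx /=.
  by rewrite mulmxA graph_span_burnside_fiber1.
set K := kermx (A *m fiber1_col).
have /sub_addsmxP[u KAE] : (K *m A <= D *m A + ind_row (setX 1 C)%g)%MS.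
  exact: submx_trans (submxMl K A) burnside_sub_graphs_setX1.
have u2_0 : u.2 = 0.
  have := mulmx_ker (A *m fiber1_col); rewrite mulmxA KAE mulmxDl -!mulmxA.
  rewrite [D *m _]mulmxA graph_span_burnside_fiber1 mulmx0 add0r.
  rewrite ind_setX1_fiber1 mul_mx_scalar => /eqP; rewrite scaler_eq0 pnatr_eq0.
  by rewrite subn_eq0 leqNgt prime_gt1 // => /eqP.
rewrite u2_0 mul0mx addr0 mulmxA in KAE.
rewrite -[K](subrK (u.1 *m D)) addmx_sub_adds ?submxMl //.
by rewrite sub_kermx mulmxBl KAE subrr.
Qed.

Lemma rank_ker_burnside_add_graph_span :
  \rank (kermx A + D)%MS = (#|subgroups P| - 1)%N.
Proof.
by rewrite -(eqmxP ker_burnside_fiber1) mxrank_ker rank_burnside_fiber1.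
Qed.

Lemma rank_graph_span : (\rank D + #|subgroups G|)%N = #|subgroups P|.
Proof.
rewrite -(card_nongraph_subgroups G prC) -sum1dep_card rank_diag_mx /sub_idx.
under eq_bigr => i _ do rewrite mxE pnatr_eq0 eqb0 negbK.
rewrite -(big_enum_val (A := mem (subgroups P)) (fun S => is_graph G C S : nat)).
rewrite big_mkcondr -big_split /= -sum1_card; apply: eq_bigr => S _.
by case: is_graph.
Qed.

End GraphsInBurnsideRing.

Theorem proposition4p5 (p : nat) (gT cT : finGroupType)
    (G : {group gT}) (C : {group cT}) :
  prime p -> (p.-group G)%g -> abelian G -> #|C| = p ->
  ((rankK (setX_group G C))%:Z - (rankKgraph G C)%:Z
     = #|subgroups G|%:Z - 1)%R.
Proof.
move=> pr_p pG abG oC; rewrite /rankK /rankKgraph /brauerK.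
have subgroupsG_gt0 : (0 < #|subgroups G|)%N.
  by apply/card_gt0P; exists 1%G; rewrite inE sub1G.
have := rank_ker_burnside_add_graph_span pr_p pG abG oC.
have := rank_graph_span G pr_p oC.
set K := kermx _; set D := graph_span G C; have := mxrank_sum_cap K D.
set n := #|subgroups (setX_group G C)|.
lia.
Qed.
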